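(* Let $p_0<p_g<1-S$ and set $\hat\theta_g:=(p_g+S)\wedge1$. Suppose there exist $\mu_g\in(0,1)$, $\bar\theta_g,\bar\theta_m$ and $\hat\theta\in(0,\hat\theta_g)$ with $\bar\theta_g<\bar\theta_m<p_g$ satisfying: (a) $p_g+\bar\theta_g=2\bar\theta_m$; (b) $2\bar\theta_m+2S=\hat\theta+p_g+S$; (c) $\bar\theta_g\ge I$; (d) $\mu_g\bar\theta_g+(1-\mu_g)\bar\theta_m=\mathbb{E}[\theta\mid\theta\le\hat\theta]$; (e) $\bar\theta_g\ge\mathbb{E}[\theta\mid\theta\le F^{-1}(\mu_gF(\hat\theta))]$; (f) for all $p'\in(\bar\theta_g,p_g]$: $\dfrac{\mu_gF(\hat\theta)\bar\theta_g+\int_{\hat\theta}^{p'+S}\theta f(\theta)d\theta}{\mu_gF(\hat\theta)+F(p'+S)-F(\hat\theta)}-p'<0$; (g) for all $p'\in(p_g,1-S]$: $\dfrac{(1-\mu_g)F(\hat\theta)\bar\theta_m+\int_{\hat\theta_g}^{p'+S}\theta f(\theta)d\theta}{(1-\mu_g)F(\hat\theta)+F(p'+S)-F(\hat\theta_g)}-p'<0$. Then there exists a short-lived stimulation equilibrium of the two-period model with a transparent bailout at $p_g$, in which types $\theta\le\hat\theta$ sell in both periods (a fraction $\mu_g$ of them, with average value $\bar\theta_g$, to the government at $t=1$ and then at price $\bar\theta_g$ at $t=2$; the rest, with average value $\bar\theta_m$, to the market at price $\bar\theta_m$ in both periods), types in $(\hat\theta,\hat\theta_g]$ sell only to the government at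 $t=1$, and types above $\hat\theta_g$ never sell.
   Context: Two-period model: a continuum of firms with privately known type $\theta\in[0,1]$, cdf $F$, density $f>0$, $f$ strictly log-concave, and for every $b\in(0,1]$ the map $a\mapsto 2\mathbb{E}[\theta\mid a<\theta<b]-\mathbb{E}[\theta\mid\theta\le a]$ is increasing on $(0,b)$. A type-$\theta$ firm holds one unit of an asset worth $\theta$ in each of two periods $t=1,2$. In each period it has a project with cost $I>0$ and net return $S>0$ that can be funded only by selling that period's unit; selling at price $p\ge I$ yields $p+S$ for that period, not selling yields $\theta$. Firms' total payoff is the sum over periods (equilibria in the limit of period-2 weight $\delta\to1$). In each period competitive short-lived risk-neutral buyers make Bertrand price offers, breaking even in expectation (indifferent buyers buy). At $t=1$ only, the government offers to buy one unit at price $p_g$; firms sell their $t=1$ unit to the government, to the market, or not at all. $t=1$ market sales are unobserved at $t=2$; acceptance of the government offer is observed at $t=2$ (transparent bailout), so $t=2$ buyers can make separate offers to recipients and non-recipients. Equilibrium means perfect Bayesian equilibrium. Laissez-faire: $\theta_0\in(0,1)$ uniquely solves $\theta_0-S=\mathbb{E}[\theta\mid\theta\le\theta_0]$, $p_0:=\mathbb{E}[\theta\mid\theta\le\theta_0]\ge I$. Every equilibrium has cutoffs $0<\hat\theta\le\hat\theta_g\le\theta_2$: types $\le\hat\theta$ sell in both periods, types in $(\hat\theta,\hat\theta_g]$ sell only at $t=1$ to the government, types in $(\hat\theta_g,\theta_2]$ sell only at $t=2$, higher types never sell. A short-lived stimulation equilibrium is one with $\hat\theta_g=\theta_2$. 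*)

From Stdlib Require Import Reals.
From Coquelicot Require Import Coquelicot.
Open Scope R_scope.

Definition cdf (f : R -> R) (x : R) : R := RInt f 0 x.

Definition cmean_le (f : R -> R) (a : R) : R :=
  RInt (fun t => t * f t) 0 a / RInt f 0 a.

Definition cmean_btw (f : R -> R) (a b : R) : R :=
  RInt (fun t => t * f t) a b / RInt f a b.

Definition density_assumptions (f : R -> R) : Prop :=
  (forall x, 0 <= x <= 1 -> 0 < f x) /\
  ex_RInt f 0 1 /\ RInt f 0 1 = 1 /\
  (forall x y t, 0 <= x <= 1 -> 0 <= y <= 1 -> x <> y -> 0 < t < 1 ->
     t * ln (f x) + (1 - t) * ln (f y) < ln (f (t * x + (1 - t) * y))) /\
  (forall b, 0 < b <= 1 -> forall a1 a2, 0 < a1 -> a1 < a2 -> a2 < b ->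
     2 * cmean_btw f a1 b - cmean_le f a1 < 2 * cmean_btw f a2 b - cmean_le f a2).

(* one-period payoff of selling the period's unit at price p: the project
   (cost I, net return S) is funded iff p >= I. *)
Definition u (I S p : R) : R := if Rle_dec I p then p + S else p.

Definition le_ind (a b : R) : R := if Rle_dec a b then 1 else 0.

Record profile := mkProfile {
  gov : R -> R;      (* prob. that type theta sells to the government at t=1 *)
  mkt : R -> R;      (* prob. that type theta sells to the market at t=1 *)
  sell_r : R -> R;   (* prob. of selling at t=2, recipient of the bailout *)
  sell_m : R -> R;   (* prob. of selling at t=2, sold to market at t=1 *)
  sell_o : R -> R;   (* prob. of selling at t=2, did not sell at t=1 *)
  price1 : R;
  price2r : R;       (* t=2 price offered to government-offer recipients *)
  price2n : R        (* t=2 price offered to non-recipients *)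
}.

Definition none_w (P : profile) (t : R) : R := 1 - gov P t - mkt P t.

Definition V2 (I S p t : R) : R := Rmax (u I S p) t.

Definition VG (I S pg : R) (P : profile) (t : R) : R :=
  u I S pg + V2 I S (price2r P) t.
Definition VM (I S : R) (P : profile) (t : R) : R :=
  u I S (price1 P) + V2 I S (price2n P) t.
Definition VN (I S : R) (P : profile) (t : R) : R :=
  t + V2 I S (price2n P) t.

Definition mass (f w : R -> R) : R := RInt (fun t => w t * f t) 0 1.
Definition value (f w : R -> R) : R := RInt (fun t => t * (w t * f t)) 0 1.

Definition integrable_pool (f w : R -> R) : Prop :=
  ex_RInt (fun t => w t * f t) 0 1 /\ ex_RInt (fun t => t * (w t * f t)) 0 1.

Definition breaks_even (f w : R -> R) (p : R) : Prop :=
  0 < mass f w -> value f w = p * mass f w.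

(* no buyer can profitably (or break-even, indifferent buyers buy) offer a
   higher price p' attracting the pool w p' *)
Definition no_profitable_deviation (f : R -> R) (pool : R -> R -> R) (p : R) : Prop :=
  forall p', p < p' -> 0 < mass f (pool p') ->
    value f (pool p') < p' * mass f (pool p').

Definition w2r (P : profile) (t : R) : R := gov P t * sell_r P t.
Definition w2n (P : profile) (t : R) : R :=
  mkt P t * sell_m P t + none_w P t * sell_o P t.

Definition is_equilibrium (f : R -> R) (I S pg : R) (P : profile) : Prop :=
  (forall t, 0 <= t <= 1 ->
     0 <= gov P t /\ 0 <= mkt P t /\ gov P t + mkt P t <= 1 /\
     0 <= sell_r P t <= 1 /\ 0 <= sell_m P t <= 1 /\ 0 <= sell_o P t <= 1) /\
  integrable_pool f (gov P) /\ integrable_pool f (mkt P) /\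
  integrable_pool f (w2r P) /\ integrable_pool f (w2n P) /\
  (forall t, 0 <= t <= 1 ->
     (0 < sell_r P t -> t <= u I S (price2r P)) /\
     (sell_r P t < 1 -> u I S (price2r P) <= t) /\
     (0 < sell_m P t -> t <= u I S (price2n P)) /\
     (sell_m P t < 1 -> u I S (price2n P) <= t) /\
     (0 < sell_o P t -> t <= u I S (price2n P)) /\
     (sell_o P t < 1 -> u I S (price2n P) <= t)) /\
  (forall t, 0 <= t <= 1 ->
     (0 < gov P t -> VM I S P t <= VG I S pg P t /\ VN I S P t <= VG I S pg P t) /\
     (0 < mkt P t -> VG I S pg P t <= VM I S P t /\ VN I S P t <= VM I S P t) /\
     (0 < none_w P t -> VG I S pg P t <= VN I S P t /\ VM I S P t <= VN I S P t)) /\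
  breaks_even f (mkt P) (price1 P) /\
  breaks_even f (w2r P) (price2r P) /\
  breaks_even f (w2n P) (price2n P) /\
  no_profitable_deviation f
    (fun p' t => le_ind (VG I S pg P t) (u I S p' + V2 I S (price2n P) t) *
                 le_ind (VN I S P t) (u I S p' + V2 I S (price2n P) t))
    (price1 P) /\
  no_profitable_deviation f
    (fun p' t => gov P t * le_ind t (u I S p')) (price2r P) /\
  no_profitable_deviation f
    (fun p' t => (1 - gov P t) * le_ind t (u I S p')) (price2n P).

Definition sls_structure (f : R -> R) (S pg mu thg thm th : R)
    (P : profile) : Prop :=
  let thG := Rmin (pg + S) 1 in
  price1 P = thm /\ price2n P = thm /\ price2r P = thg /\
  (forall t, 0 <= t <= th ->
     gov P t + mkt P t = 1 /\ sell_r P t = 1 /\ sell_m P t = 1) /\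
  RInt (fun t => gov P t * f t) 0 th = mu * cdf f th /\
  RInt (fun t => t * (gov P t * f t)) 0 th = mu * cdf f th * thg /\
  RInt (fun t => t * (mkt P t * f t)) 0 th = (1 - mu) * cdf f th * thm /\
  (forall t, th < t <= thG -> gov P t = 1 /\ sell_r P t = 0) /\
  (forall t, thG < t <= 1 -> gov P t = 0 /\ mkt P t = 0 /\ sell_o P t = 0).

(* Write F for the cdf of the type density and G for its
   partial first moment.  By the intermediate value theorem pick [x] with
   F(x) = mu F(th).  Condition (e) says that the types below [x] have mean at
   most [thg], while by (d) the whole bottom pool [0, th] has mean above
   [thg]; hence a suitable mixture of "all types below [x]" and "a fraction
   [mu] of every type below [th]" has mass mu F(th) and mean exactly [thg].
   This mixture is the set of bottom types that accept the bailout; the rest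
   of [0, th] trades on the market at [thm], types in (th, pg + S] take only
   the bailout and higher types never sell.  Equilibrium is then checked
   piece by piece: firm optimality is pure comparison of cutoffs, buyers
   break even by the choice of the mixture, and every upward price deviation
   attracts a pool which loses money by (f) and (g). *)

From Stdlib Require Import Reals Lra Lia List.
From Coquelicot Require Import Coquelicot.
Import ListNotations.
Open Scope R_scope.

(** * Integrability of the first moment *)

Definition grid_floor (a d t : R) : R := a + d * IZR (Int_part ((t - a) / d)).

Lemma grid_floor_close (a d t : R) : 0 < d -> 0 <= t - grid_floor a d t < d.
Proof.
  intros Hd. unfold grid_floor.
  destruct (base_Int_part ((t - a) / d)) as [Hlo Hhi].
  set (k := IZR (Int_part ((t - a) / d))) in *.
  assert (E : t - (a + d * k) = d * ((t - a) / d - k)) by (field; lra).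
  rewrite E. split; [apply Rmult_le_pos|]; nra.
Qed.

Lemma Int_part_unique (r : R) (k : nat) : INR k <= r < INR k + 1 ->
  IZR (Int_part r) = INR k.
Proof.
  intros Hr. unfold Int_part.
  rewrite <- (tech_up r (Z.of_nat k + 1)); rewrite ?plus_IZR, <- ?INR_IZR_INZ; try lra.
  rewrite minus_IZR, plus_IZR, <- INR_IZR_INZ. lra.
Qed.

Lemma grid_floor_cell (a d t : R) (k : nat) : 0 < d ->
  a + d * INR k < t < a + d * (INR k + 1) -> grid_floor a d t = a + d * INR k.
Proof.
  intros Hd Ht. unfold grid_floor. rewrite (Int_part_unique _ k); [reflexivity|].
  assert (E : d * ((t - a) / d) = t - a) by (field; lra).
  split.
  - apply (Rmult_le_reg_l d); [lra|]. rewrite E. lra.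
  - apply (Rmult_lt_reg_l d); [lra|]. rewrite E. lra.
Qed.

Lemma ex_RInt_grid_floor (h : R -> R) (a b : R) (N : nat) :
  a < b -> (0 < N)%nat -> ex_RInt h a b ->
  ex_RInt (fun t => grid_floor a ((b - a) / INR N) t * h t) a b.
Proof.
  intros Hab HN Hh.
  set (d := (b - a) / INR N).
  assert (HNpos : 0 < INR N) by (apply lt_0_INR; exact HN).
  assert (Hd : 0 < d) by (apply Rdiv_lt_0_compat; lra).
  assert (Hgrid : forall k, (k <= N)%nat -> a + d * INR k <= b).
  { intros k Hk. apply le_INR in Hk.
    assert (d * INR k <= d * INR N) by (apply Rmult_le_compat_l; lra).
    replace (d * INR N) with (b - a) in * by (unfold d; field; lra). lra. }
  assert (Hcells : forall k, (k <= N)%nat ->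
            ex_RInt (fun t => grid_floor a d t * h t) a (a + d * INR k)).
  { induction k as [|k IH]; intros Hk.
    - rewrite Rmult_0_r, Rplus_0_r. apply ex_RInt_point.
    - assert (Hk' := Hgrid (S k) Hk). rewrite S_INR in *.
      assert (Hlo : a <= a + d * INR k) by (pose proof (pos_INR k); nra).
      apply (ex_RInt_Chasles _ _ (a + d * INR k)); [apply IH; lia|].
      apply (ex_RInt_ext (fun t => (a + d * INR k) * h t)).
      + intros t Ht. rewrite Rmin_left, Rmax_right in Ht by nra.
        rewrite (grid_floor_cell a d t k); lra.
      + apply (ex_RInt_scal (V := R_NormedModule) h).
        apply (ex_RInt_Chasles_2 (V := R_CompleteNormedModule) _ a); [nra|].
        apply (ex_RInt_Chasles_1 (V := R_CompleteNormedModule) _ _ _ b); [lra|exact Hh]. }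
  assert (Hend : a + d * INR N = b) by (unfold d; field; lra).
  rewrite <- Hend. apply Hcells, le_n.
Qed.

Lemma grid_floor_uniform (h : R -> R) (a b M : R) : a < b -> (forall t, Rabs (h t) <= M) ->
  filterlim (fun (n : nat) t => grid_floor a ((b - a) / INR (S n)) t * h t) eventually
            (locally (fun t => t * h t : R_UniformSpace)).
Proof.
  intros Hab Hh P [eps HP].
  assert (HM : 0 <= M) by (eapply Rle_trans; [apply Rabs_pos|apply (Hh 0)]).
  assert (HbaM : 0 < (b - a) * (M + 1)) by nra.
  destruct (archimed_cor1 (eps / ((b - a) * (M + 1)))) as [N0 [HN0 HN0pos]];
    [apply Rdiv_lt_0_compat; [apply cond_pos|lra]|].
  assert (HN0R : 0 < INR N0) by (apply lt_0_INR; exact HN0pos).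
  assert (Hstep : (b - a) * / INR N0 * (M + 1) < eps).
  { apply (Rmult_lt_compat_r ((b - a) * (M + 1))) in HN0; [|lra].
    replace (eps / ((b - a) * (M + 1)) * ((b - a) * (M + 1))) with (pos eps)
      in HN0 by (field; lra).
    lra. }
  exists N0. intros n Hn. apply HP. intros t.
  change (Rabs (grid_floor a ((b - a) / INR (S n)) t * h t - t * h t) < eps).
  set (d := (b - a) / INR (S n)).
  assert (Hd : 0 < d) by (apply Rdiv_lt_0_compat; [lra|apply lt_0_INR; lia]).
  assert (Hdn : d <= (b - a) * / INR N0).
  { apply Rmult_le_compat_l; [lra|]. apply Rinv_le_contravar; [lra|apply le_INR; lia]. }
  destruct (grid_floor_close a d t Hd) as [Hlo Hhi].
  replace (grid_floor a d t * h t - t * h t) with (- ((t - grid_floor a d t) * h t)) by ring.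
  rewrite Rabs_Ropp, Rabs_mult, (Rabs_right (t - _)) by lra.
  assert ((t - grid_floor a d t) * Rabs (h t) <= d * (M + 1))
    by (apply Rmult_le_compat; [lra | apply Rabs_pos | lra | specialize (Hh t); lra]).
  assert (d * (M + 1) <= (b - a) * / INR N0 * (M + 1)) by (apply Rmult_le_compat_r; lra).
  lra.
Qed.

Definition clamp (a b t : R) : R := Rmax a (Rmin t b).

Lemma clamp_range (a b t : R) : a <= b -> a <= clamp a b t <= b.
Proof. intros; unfold clamp, Rmax, Rmin; repeat destruct Rle_dec; lra. Qed.

Lemma clamp_id (a b t : R) : a <= t <= b -> clamp a b t = t.
Proof. intros; unfold clamp, Rmax, Rmin; repeat destruct Rle_dec; lra. Qed.

Lemma clamp_lipschitz (a b y z : R) : a <= b ->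
  Rabs (clamp a b y - clamp a b z) <= Rabs (y - z).
Proof.
  intros Hab. unfold clamp, Rmax, Rmin.
  repeat destruct Rle_dec; unfold Rabs; repeat destruct Rcase_abs; lra.
Qed.

(* The first moment of a Riemann-integrable function is integrable: extend
   [f] boundedly off [a, b] by clamping, and pass to the uniform limit of the
   staircase approximations. *)
Lemma ex_RInt_first_moment_lt (f : R -> R) (a b : R) :
  a < b -> ex_RInt f a b -> ex_RInt (fun t => t * f t) a b.
Proof.
  intros Hab Hf.
  destruct (ex_RInt_ub f a b Hf) as [M HM].
  rewrite Rmin_left, Rmax_right in HM by lra.
  set (fc := fun t => f (clamp a b t)).
  assert (Hfc_bound : forall t, Rabs (fc t) <= M) by (intro t; apply HM, clamp_range; lra).
  assert (Hfc_eq : forall t, Rmin a b < t < Rmax a b -> f t = fc t).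
  { intros t Ht. rewrite Rmin_left, Rmax_right in Ht by lra.
    unfold fc. rewrite clamp_id; lra. }
  assert (Hfc : ex_RInt fc a b) by exact (ex_RInt_ext _ _ _ _ Hfc_eq Hf).
  set (approx := fun (n : nat) t => grid_floor a ((b - a) / INR (S n)) t * fc t).
  assert (Happrox : forall n, is_RInt (approx n) a b (RInt (approx n) a b)).
  { intros n. apply (RInt_correct (V := R_CompleteNormedModule)).
    apply ex_RInt_grid_floor; [lra|lia|exact Hfc]. }
  destruct (filterlim_RInt (V := R_CompleteNormedModule) approx a b eventually _ _ _
              Happrox (grid_floor_uniform fc a b M Hab Hfc_bound)) as [If [_ HIf]].
  exists If. apply (is_RInt_ext (fun t => t * fc t)); [|exact HIf].
  intros t Ht. rewrite Hfc_eq; [reflexivity|exact Ht].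
Qed.

Lemma ex_RInt_first_moment (f : R -> R) (a b : R) :
  ex_RInt f a b -> ex_RInt (fun t => t * f t) a b.
Proof.
  intros Hf. destruct (Rtotal_order a b) as [Hab | [<- | Hba]].
  - exact (ex_RInt_first_moment_lt f a b Hab Hf).
  - apply ex_RInt_point.
  - apply ex_RInt_swap, ex_RInt_first_moment_lt, ex_RInt_swap; assumption.
Qed.

(** * The cdf and the partial first moment of a density on [0, 1] *)

Definition moment (f : R -> R) (x : R) : R := RInt (fun t => t * f t) 0 x.

Lemma RInt_Chasles_R (h : R -> R) (a b c : R) : ex_RInt h a b -> ex_RInt h b c ->
  RInt h a b + RInt h b c = RInt h a c.
Proof. exact (RInt_Chasles (V := R_CompleteNormedModule) h a b c). Qed.

Lemma RInt_from_0 (h : R -> R) (a b : R) : 0 <= a <= b -> b <= 1 -> ex_RInt h 0 1 ->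
  ex_RInt h a b /\ RInt h a b = RInt h 0 b - RInt h 0 a.
Proof.
  intros Hab Hb Hh.
  assert (H0b : ex_RInt h 0 b)
    by (apply (ex_RInt_Chasles_1 (V := R_CompleteNormedModule) _ _ _ 1); [lra|exact Hh]).
  assert (H0a : ex_RInt h 0 a)
    by (apply (ex_RInt_Chasles_1 (V := R_CompleteNormedModule) _ _ _ b); [lra|exact H0b]).
  assert (Hab' : ex_RInt h a b)
    by (apply (ex_RInt_Chasles_2 (V := R_CompleteNormedModule) _ 0); [lra|exact H0b]).
  split; [exact Hab'|].
  pose proof (RInt_Chasles_R h 0 a b H0a Hab'). lra.
Qed.

Lemma cdf_0 (f : R -> R) : cdf f 0 = 0.
Proof. exact (RInt_point (V := R_CompleteNormedModule) 0 f). Qed.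

Lemma moment_0 (f : R -> R) : moment f 0 = 0.
Proof. exact (RInt_point (V := R_CompleteNormedModule) 0 (fun t => t * f t)). Qed.

Lemma cdf_mono (f : R -> R) (a b : R) : (forall t, 0 <= t <= 1 -> 0 <= f t) ->
  ex_RInt f 0 1 -> 0 <= a <= b -> b <= 1 -> cdf f a <= cdf f b.
Proof.
  intros Hpos Hf Hab Hb.
  destruct (RInt_from_0 f a b Hab Hb Hf) as [Hex Hdiff].
  assert (0 <= RInt f a b) by (apply RInt_ge_0; [lra|exact Hex|intros; apply Hpos; lra]).
  unfold cdf. lra.
Qed.

(* A Riemann-integrable function is bounded, so its cdf is Lipschitz. *)
Lemma cdf_lipschitz (f : R -> R) : ex_RInt f 0 1 ->
  exists M, 0 <= M /\ forall u v, 0 <= u <= 1 -> 0 <= v <= 1 ->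
    Rabs (cdf f v - cdf f u) <= M * Rabs (v - u).
Proof.
  intros Hf. destruct (ex_RInt_ub f 0 1 Hf) as [M HM].
  rewrite Rmin_left, Rmax_right in HM by lra.
  assert (HM0 : 0 <= M) by (eapply Rle_trans; [apply Rabs_pos|apply (HM 0); lra]).
  exists M. split; [exact HM0|].
  assert (Hle : forall u v, 0 <= u <= v -> v <= 1 ->
            Rabs (cdf f v - cdf f u) <= M * Rabs (v - u)).
  { intros u v Huv Hv. destruct (RInt_from_0 f u v Huv Hv Hf) as [Hex Hdiff].
    unfold cdf. rewrite <- Hdiff, (Rabs_right (v - u)), Rmult_comm by lra.
    apply abs_RInt_le_const; [lra|exact Hex|]. intros t Ht. apply HM; lra. }
  intros u v Hu Hv. destruct (Rle_dec u v).
  - apply Hle; lra.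
  - rewrite Rabs_minus_sym, (Rabs_minus_sym v). apply Hle; lra.
Qed.

(* Intermediate values of the cdf: every level between 0 and F(b) is reached
   on [0, b].  The clamped cdf is Lipschitz on the whole line, so the
   intermediate value theorem applies to it. *)
Lemma cdf_ivt (f : R -> R) (b c : R) : ex_RInt f 0 1 -> 0 <= b <= 1 ->
  0 <= c <= cdf f b -> exists x, 0 <= x <= b /\ cdf f x = c.
Proof.
  intros Hf Hb Hc.
  destruct (cdf_lipschitz f Hf) as [M [HM0 HM]].
  set (C := fun y => cdf f (clamp 0 1 y)).
  assert (Hcont : forall y, continuous C y).
  { intros y P [eps HP].
    assert (Hdelta : 0 < eps / (M + 1)) by (apply Rdiv_lt_0_compat; [apply cond_pos|lra]).
    exists (mkposreal _ Hdelta). intros z Hz. apply HP.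
    change (Rabs (C z - C y) < eps). change (Rabs (z - y) < eps / (M + 1)) in Hz.
    eapply Rle_lt_trans; [apply HM; apply clamp_range; lra|].
    assert (Hzy := clamp_lipschitz 0 1 z y ltac:(lra)).
    apply (Rle_lt_trans _ (M * Rabs (z - y))); [apply Rmult_le_compat_l; lra|].
    apply (Rle_lt_trans _ ((M + 1) * Rabs (z - y))); [pose proof (Rabs_pos (z - y)); nra|].
    replace (pos eps) with ((M + 1) * (eps / (M + 1))) by (field; lra).
    apply Rmult_lt_compat_l; lra. }
  assert (HC0 : C 0 = 0) by (unfold C; rewrite clamp_id by lra; apply cdf_0).
  assert (HCb : C b = cdf f b) by (unfold C; rewrite clamp_id by lra; reflexivity).
  destruct (IVT_gen_consistent C 0 b c Hcont) as [x [Hx HCx]].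
  { rewrite HC0, HCb, Rmin_left, Rmax_right by lra. lra. }
  rewrite Rmin_left, Rmax_right in Hx by lra.
  exists x. split; [exact Hx|]. unfold C in HCx. rewrite clamp_id in HCx by lra. exact HCx.
Qed.

(** * Pools with piecewise-constant weights *)

Definition pool_integrals (f w : R -> R) (a b M V : R) : Prop :=
  ex_RInt (fun t => w t * f t) a b /\ RInt (fun t => w t * f t) a b = M /\
  ex_RInt (fun t => t * (w t * f t)) a b /\ RInt (fun t => t * (w t * f t)) a b = V.

Lemma pool_integrals_const (f w : R -> R) (a b c : R) :
  ex_RInt f 0 1 -> 0 <= a <= b -> b <= 1 -> (forall t, a < t < b -> w t = c) ->
  pool_integrals f w a b (c * (cdf f b - cdf f a)) (c * (moment f b - moment f a)).
Proof.
  intros Hf Hab Hb Hw.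
  assert (Emass : forall t, Rmin a b < t < Rmax a b -> c * f t = w t * f t).
  { intros t Ht. rewrite Rmin_left, Rmax_right in Ht by lra. rewrite Hw; [reflexivity|lra]. }
  assert (Evalue : forall t, Rmin a b < t < Rmax a b -> c * (t * f t) = t * (w t * f t)).
  { intros t Ht. rewrite <- Emass by exact Ht. ring. }
  destruct (RInt_from_0 f a b Hab Hb Hf) as [Hex Hdiff].
  destruct (RInt_from_0 (fun t => t * f t) a b Hab Hb (ex_RInt_first_moment f 0 1 Hf))
    as [Hexm Hdiffm].
  assert (Smass : RInt (fun t => c * f t) a b = c * RInt f a b)
    by exact (RInt_scal (V := R_CompleteNormedModule) f a b c Hex).
  assert (Svalue : RInt (fun t => c * (t * f t)) a b = c * RInt (fun t => t * f t) a b)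
    by exact (RInt_scal (V := R_CompleteNormedModule) (fun t => t * f t) a b c Hexm).
  unfold pool_integrals, cdf, moment.
  rewrite <- (RInt_ext (V := R_CompleteNormedModule) _ _ a b Emass),
          <- (RInt_ext (V := R_CompleteNormedModule) _ _ a b Evalue),
          Smass, Svalue, Hdiff, Hdiffm.
  split; [|split; [reflexivity|split; [|reflexivity]]].
  - apply (ex_RInt_ext _ _ a b Emass), (ex_RInt_scal (V := R_NormedModule) f), Hex.
  - apply (ex_RInt_ext _ _ a b Evalue), (ex_RInt_scal (V := R_NormedModule)), Hexm.
Qed.

Lemma pool_integrals_glue (f w : R -> R) (a b c M1 V1 M2 V2 : R) :
  pool_integrals f w a b M1 V1 -> pool_integrals f w b c M2 V2 ->
  pool_integrals f w a c (M1 + M2) (V1 + V2).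
Proof.
  intros [Hm1 [EM1 [Hv1 EV1]]] [Hm2 [EM2 [Hv2 EV2]]].
  split; [|split; [|split]].
  - exact (ex_RInt_Chasles _ _ _ _ Hm1 Hm2).
  - rewrite <- (RInt_Chasles_R _ _ _ _ Hm1 Hm2). congruence.
  - exact (ex_RInt_Chasles _ _ _ _ Hv1 Hv2).
  - rewrite <- (RInt_Chasles_R _ _ _ _ Hv1 Hv2). congruence.
Qed.

(* A list [(c1, b1); (c2, b2); ...] read from a start point [a] describes the
   weight c1 on (a, b1), c2 on (b1, b2), ...; [step_end] is the last
   breakpoint and [step_sum F] the corresponding combination of increments
   of [F]. *)
Fixpoint step_weight (w : R -> R) (a : R) (l : list (R * R)) : Prop :=
  match l with
  | [] => True
  | (c, b) :: l' => a <= b /\ (forall t, a < t < b -> w t = c) /\ step_weight w b l'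
  end.

Fixpoint step_end (a : R) (l : list (R * R)) : R :=
  match l with
  | [] => a
  | (_, b) :: l' => step_end b l'
  end.

Fixpoint step_sum (F : R -> R) (a : R) (l : list (R * R)) : R :=
  match l with
  | [] => 0
  | (c, b) :: l' => c * (F b - F a) + step_sum F b l'
  end.

Lemma step_end_ge (w : R -> R) (a : R) (l : list (R * R)) :
  step_weight w a l -> a <= step_end a l.
Proof.
  revert a. induction l as [|[c b] l IH]; intros a Hl; simpl in *; [lra|].
  destruct Hl as [Hab [_ Hl]]. specialize (IH b Hl). lra.
Qed.

Lemma pool_integrals_step (f w : R -> R) (a : R) (l : list (R * R)) :
  ex_RInt f 0 1 -> 0 <= a -> step_weight w a l -> step_end a l <= 1 ->
  pool_integrals f w a (step_end a l) (step_sum (cdf f) a l) (step_sum (moment f) a l).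
Proof.
  intros Hf. revert a. induction l as [|[c b] l IH]; intros a Ha Hl Hend; simpl in *.
  - repeat split; try apply ex_RInt_point; apply (RInt_point (V := R_CompleteNormedModule)).
  - destruct Hl as [Hab [Hw Hl]].
    assert (Hb := step_end_ge w b l Hl).
    apply pool_integrals_glue with b.
    + apply pool_integrals_const; auto; lra.
    + apply IH; auto; lra.
Qed.

Lemma pool_of_steps (f w : R -> R) (l : list (R * R)) :
  ex_RInt f 0 1 -> step_weight w 0 l -> step_end 0 l = 1 ->
  integrable_pool f w /\ mass f w = step_sum (cdf f) 0 l /\
  value f w = step_sum (moment f) 0 l.
Proof.
  intros Hf Hl Hend.
  destruct (pool_integrals_step f w 0 l Hf (Rle_refl 0) Hl (Req_le _ _ Hend))
    as [Hm [EM [Hv EV]]].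
  rewrite Hend in *. repeat split; assumption.
Qed.

Lemma initial_segment_pool (f w : R -> R) (r : R) : ex_RInt f 0 1 -> 0 <= r <= 1 ->
  (forall t, 0 < t < r -> w t = 1) -> (forall t, r < t < 1 -> w t = 0) ->
  integrable_pool f w /\ mass f w = cdf f r /\ value f w = moment f r.
Proof.
  intros Hf Hr Hlo Hhi.
  destruct (pool_of_steps f w [(1, r); (0, 1)] Hf) as [Hint [Hm Hv]];
    [simpl; repeat split; auto; lra | reflexivity |].
  cbn [step_sum] in Hm, Hv. rewrite cdf_0 in Hm. rewrite moment_0 in Hv.
  repeat split; try apply Hint; lra.
Qed.

Lemma u_funded (I S p : R) : I <= p -> u I S p = p + S.
Proof. intros Hp. unfold u. destruct (Rle_dec I p); [reflexivity|lra]. Qed.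

(* On an event of zero mass the conditional mean is 0 (division by 0). *)
Lemma cmean_le_null (f : R -> R) (a : R) : cdf f a = 0 -> cmean_le f a = 0.
Proof. unfold cmean_le, cdf. intros ->. unfold Rdiv. rewrite Rinv_0. ring. Qed.

Lemma moment_of_cmean (f : R -> R) (a : R) : 0 < cdf f a ->
  moment f a = cmean_le f a * cdf f a.
Proof.
  intros Ha. assert (E : forall G F : R, 0 < F -> G = G / F * F) by (intros; field; lra).
  apply E, Ha.
Qed.

Lemma cdf_pos_of_cmean (f : R -> R) (a : R) : (forall t, 0 <= t <= 1 -> 0 <= f t) ->
  ex_RInt f 0 1 -> 0 <= a <= 1 -> cmean_le f a <> 0 -> 0 < cdf f a.
Proof.
  intros Hpos Hf Ha Hmean.
  assert (0 <= cdf f a) by (rewrite <- (cdf_0 f); apply cdf_mono; auto; lra).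
  destruct (Req_dec (cdf f a) 0) as [E|E]; [|lra].
  exfalso. exact (Hmean (cmean_le_null f a E)).
Qed.

(* Conditions (f) and (g) cleared of denominators: a buyer pooling a mass
   [M0] of value [V0] with all types in (a, r], at the price r - S at which
   exactly these types accept, loses money. *)
Lemma loss_condition_cleared (f : R -> R) (M0 V0 S a b : R) :
  (forall t, 0 <= t <= 1 -> 0 <= f t) -> ex_RInt f 0 1 -> 0 <= a -> b <= 1 -> 0 < M0 ->
  (forall p, a - S < p <= b - S ->
     (V0 + RInt (fun t => t * f t) a (p + S)) / (M0 + cdf f (p + S) - cdf f a) - p < 0) ->
  forall r, a < r <= b ->
  V0 + (moment f r - moment f a) < (r - S) * (M0 + cdf f r - cdf f a).
Proof.
  intros Hpos Hf Ha Hb HM0 Hloss r Hr.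
  assert (Hq := Hloss (r - S) ltac:(lra)). replace (r - S + S) with r in Hq by ring.
  assert (HFa : cdf f a <= cdf f r) by (apply cdf_mono; auto; lra).
  destruct (RInt_from_0 (fun t => t * f t) a r ltac:(lra) ltac:(lra)
              (ex_RInt_first_moment f 0 1 Hf)) as [_ Hdiff].
  fold (moment f r) (moment f a) in Hdiff. rewrite <- Hdiff.
  set (D := M0 + cdf f r - cdf f a) in *.
  assert (HD : 0 < D) by (unfold D; lra).
  apply (Rmult_lt_reg_r (/ D)); [apply Rinv_0_lt_compat, HD|].
  rewrite Rmult_assoc, Rinv_r by lra. unfold Rdiv in Hq. lra.
Qed.

(* Pool splitting: if the bottom [x]-pool (mass mu F(th)) has mean at most
   [thg] and the whole [th]-pool has mean above [thg], then a mixture with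
   weight lam of the [x]-pool and 1 - lam of a uniform mu-slice of the
   [th]-pool, i.e. weights A on [0, x] and B on (x, th], has mass mu F(th)
   and mean exactly [thg]. *)
Lemma pool_split (mu Fx Fth Gx Gth thg : R) :
  0 < mu < 1 -> 0 < Fx -> Fx = mu * Fth -> Gx / Fx <= thg -> thg < Gth / Fth ->
  exists A B, 0 <= A <= 1 /\ 0 <= B <= 1 /\
    A * Fx + B * (Fth - Fx) = mu * Fth /\ A * Gx + B * (Gth - Gx) = mu * Fth * thg.
Proof.
  intros Hmu HFx EFx Hc Hm.
  assert (HFth : 0 < Fth) by nra.
  set (c := Gx / Fx) in *. set (m := Gth / Fth) in *.
  assert (EGx : Gx = c * Fx) by (unfold c; field; lra).
  assert (EGth : Gth = m * Fth) by (unfold m; field; lra).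
  set (lam := (m - thg) / (m - c)).
  assert (Hlam : 0 < lam <= 1).
  { unfold lam. split; [apply Rdiv_lt_0_compat; lra|].
    apply (Rmult_le_reg_r (m - c)); [lra|]. unfold Rdiv. rewrite Rmult_assoc, Rinv_l; lra. }
  assert (Elam : lam * (m - c) = m - thg) by (unfold lam; field; lra).
  exists (lam + (1 - lam) * mu), ((1 - lam) * mu).
  split; [nra|]. split; [nra|]. split.
  - rewrite EFx. ring.
  - rewrite EGx, EGth, EFx. replace thg with (m - lam * (m - c)) by lra. ring.
Qed.

(** * The short-lived stimulation profile and its verification *)

Section ShortLivedStimulation.

Variable f : R -> R.
Variables S I pg mu thg thm th x A B : R.

Hypothesis f_nonneg : forall t, 0 <= t <= 1 -> 0 <= f t.
Hypothesis f_int : ex_RInt f 0 1.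
Hypothesis I_le_thg : I <= thg.
Hypothesis thg_lt_thm : thg < thm.
Hypothesis thm_lt_pg : thm < pg.
Hypothesis pgS_lt_1 : pg + S < 1.
Hypothesis midpoint : pg + thg = 2 * thm.
Hypothesis th_def : th = thg + S.
Hypothesis x_range : 0 < x < th.
Hypothesis A_range : 0 <= A <= 1.
Hypothesis B_range : 0 <= B <= 1.
Hypothesis mu_range : 0 < mu < 1.
Hypothesis Fth_pos : 0 < cdf f th.
(* the bailout recipients among [0, th] have mass mu F(th) and mean thg *)
Hypothesis gov_mass : A * cdf f x + B * (cdf f th - cdf f x) = mu * cdf f th.
Hypothesis gov_value :
  A * moment f x + B * (moment f th - moment f x) = mu * cdf f th * thg.
(* condition (d): the market sellers then have mean thm *)
Hypothesis bottom_value :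
  moment f th = mu * cdf f th * thg + (1 - mu) * cdf f th * thm.
(* conditions (f) and (g), cleared of denominators *)
Hypothesis recip_unprofitable : forall r, th < r <= pg + S ->
  mu * cdf f th * thg + (moment f r - moment f th) <
  (r - S) * (mu * cdf f th + cdf f r - cdf f th).
Hypothesis nonrecip_unprofitable : forall r, pg + S < r <= 1 ->
  (1 - mu) * cdf f th * thm + (moment f r - moment f (pg + S)) <
  (r - S) * ((1 - mu) * cdf f th + cdf f r - cdf f (pg + S)).

(* Probability of taking the bailout: A below x, B on (x, th], 1 up to
   pg + S; the rest of [0, th] sells on the market; second-period sales
   occur up to the cutoffs u(thg) = th and u(thm) = thm + S. *)
Definition gov_w (t : R) : R :=
  if Rle_dec t x then A else if Rle_dec t th then B
  else if Rle_dec t (pg + S) then 1 else 0.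
Definition mkt_w (t : R) : R :=
  if Rle_dec t x then 1 - A else if Rle_dec t th then 1 - B else 0.
Definition sell_recip (t : R) : R := if Rle_dec t th then 1 else 0.
Definition sell_nonrecip (t : R) : R := if Rle_dec t (thm + S) then 1 else 0.
Definition sls_profile : profile :=
  mkProfile gov_w mkt_w sell_recip sell_nonrecip sell_nonrecip thm thg thm.

(* Pointwise facts about the profile reduce to comparisons of cutoffs. *)
Ltac by_thresholds :=
  intros;
  unfold le_ind, VG, VM, VN, V2, w2r, w2n, none_w in *;
  cbn [gov mkt sell_r sell_m sell_o price1 price2r price2n sls_profile] in *;
  unfold Rmax, gov_w, mkt_w, sell_recip, sell_nonrecip in *;
  repeat rewrite u_funded in * by lra;
  repeat match goal with
         | |- context [Rle_dec ?a ?b] => destruct (Rle_dec a b)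
         | _ : context [Rle_dec ?a ?b] |- _ => destruct (Rle_dec a b)
         end;
  lra.

Lemma recipient_pool (w : R -> R) :
  (forall t, 0 < t < x -> w t = A) -> (forall t, x < t < th -> w t = B) ->
  (forall t, th < t < 1 -> w t = 0) ->
  integrable_pool f w /\ mass f w = mu * cdf f th /\ value f w = mu * cdf f th * thg.
Proof.
  intros H1 H2 H3.
  destruct (pool_of_steps f w [(A, x); (B, th); (0, 1)] f_int) as [Hint [Hm Hv]];
    [simpl; repeat split; auto; lra | reflexivity |].
  cbn [step_sum] in Hm, Hv. rewrite cdf_0 in Hm. rewrite moment_0 in Hv.
  repeat split; try apply Hint; lra.
Qed.

Lemma market_pool (w : R -> R) :
  (forall t, 0 < t < x -> w t = 1 - A) -> (forall t, x < t < th -> w t = 1 - B) ->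
  (forall t, th < t < 1 -> w t = 0) ->
  integrable_pool f w /\ mass f w = (1 - mu) * cdf f th /\
  value f w = (1 - mu) * cdf f th * thm.
Proof.
  intros H1 H2 H3.
  destruct (pool_of_steps f w [(1 - A, x); (1 - B, th); (0, 1)] f_int) as [Hint [Hm Hv]];
    [simpl; repeat split; auto; lra | reflexivity |].
  cbn [step_sum] in Hm, Hv. rewrite cdf_0 in Hm. rewrite moment_0 in Hv.
  repeat split; try apply Hint; lra.
Qed.

Lemma gov_pool_integrable : integrable_pool f gov_w.
Proof.
  apply (pool_of_steps f gov_w [(A, x); (B, th); (1, pg + S); (0, 1)] f_int);
    [simpl; repeat split; try lra; by_thresholds | reflexivity].
Qed.

Lemma segment_unprofitable (r p : R) : th < r <= 1 -> r - S <= p -> thm <= p ->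
  moment f r < p * cdf f r.
Proof.
  intros Hr Hrp Hmp.
  assert (Hmu : 0 < (1 - mu) * cdf f th) by (apply Rmult_lt_0_compat; lra).
  destruct (Rle_dec r (pg + S)) as [Hlow | Hhigh].
  - assert (Hrec := recip_unprofitable r ltac:(lra)).
    assert (cdf f th <= cdf f r) by (apply cdf_mono; auto; lra).
    assert ((r - S) * (mu * cdf f th + cdf f r - cdf f th) <=
            p * (mu * cdf f th + cdf f r - cdf f th))
      by (apply Rmult_le_compat_r; nra).
    assert ((1 - mu) * cdf f th * thm <= (1 - mu) * cdf f th * p)
      by (apply Rmult_le_compat_l; lra).
    nra.
  - assert (Hrec := recip_unprofitable (pg + S) ltac:(lra)).
    assert (Hnon := nonrecip_unprofitable r ltac:(lra)).
    assert (cdf f th <= cdf f (pg + S)) by (apply cdf_mono; auto; lra).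
    assert (cdf f (pg + S) <= cdf f r) by (apply cdf_mono; auto; lra).
    assert (pg * (mu * cdf f th + cdf f (pg + S) - cdf f th) <=
            p * (mu * cdf f th + cdf f (pg + S) - cdf f th))
      by (apply Rmult_le_compat_r; nra).
    assert ((r - S) * ((1 - mu) * cdf f th + cdf f r - cdf f (pg + S)) <=
            p * ((1 - mu) * cdf f th + cdf f r - cdf f (pg + S)))
      by (apply Rmult_le_compat_r; nra).
    replace (pg + S - S) with pg in Hrec by ring.
    nra.
Qed.

Lemma segment_deviation_pool (w : R -> R) (r p : R) :
  th < r <= 1 -> r - S <= p -> thm <= p ->
  (forall t, 0 < t < r -> w t = 1) -> (forall t, r < t < 1 -> w t = 0) ->
  value f w < p * mass f w.
Proof.
  intros Hr Hrp Hmp H1 H2.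
  destruct (initial_segment_pool f w r f_int) as [_ [-> ->]]; [lra | exact H1 | exact H2 |].
  apply segment_unprofitable; assumption.
Qed.

(* A higher first-period offer [p] attracts an initial segment of types:
   up to p + thm - pg + S if p < pg, up to p + S otherwise. *)
Lemma no_deviation_first_period :
  no_profitable_deviation f
    (fun p' t => le_ind (VG I S pg sls_profile t) (u I S p' + V2 I S (price2n sls_profile) t) *
                 le_ind (VN I S sls_profile t) (u I S p' + V2 I S (price2n sls_profile) t))
    (price1 sls_profile).
Proof.
  intros p Hp _. simpl in Hp.
  destruct (Rlt_dec p pg) as [Hlow | Hhigh]; [|destruct (Rle_dec (p + S) 1) as [Hin | Hout]].
  - apply (segment_deviation_pool _ (p + thm - pg + S)); try lra; by_thresholds.
  - apply (segment_deviation_pool _ (p + S)); try lra; by_thresholds.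
  - apply (segment_deviation_pool _ 1); try lra; by_thresholds.
Qed.

Lemma recipient_deviation_pool (w : R -> R) (r p : R) :
  th < r <= pg + S -> r - S <= p ->
  (forall t, 0 < t < x -> w t = A) -> (forall t, x < t < th -> w t = B) ->
  (forall t, th < t < r -> w t = 1) -> (forall t, r < t < 1 -> w t = 0) ->
  0 < mass f w -> value f w < p * mass f w.
Proof.
  intros Hr Hrp H1 H2 H3 H4 Hpos.
  destruct (pool_of_steps f w [(A, x); (B, th); (1, r); (0, 1)] f_int) as [_ [Hm Hv]];
    [simpl; repeat split; auto; lra | reflexivity |].
  cbn [step_sum] in Hm, Hv. rewrite cdf_0 in Hm. rewrite moment_0 in Hv.
  assert (Hrec := recip_unprofitable r Hr).
  assert (Hmass : mass f w = mu * cdf f th + cdf f r - cdf f th) by lra.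
  assert (Hvalue : value f w = mu * cdf f th * thg + (moment f r - moment f th)) by lra.
  rewrite Hvalue. rewrite Hmass in *.
  assert ((r - S) * (mu * cdf f th + cdf f r - cdf f th) <=
          p * (mu * cdf f th + cdf f r - cdf f th)) by (apply Rmult_le_compat_r; lra).
  lra.
Qed.

(* An offer [p] to recipients attracts them up to min (p, pg) + S. *)
Lemma no_deviation_recipients :
  no_profitable_deviation f (fun p' t => gov sls_profile t * le_ind t (u I S p'))
    (price2r sls_profile).
Proof.
  intros p Hp Hpos. simpl in Hp.
  destruct (Rle_dec p pg) as [Hlow | Hhigh].
  - apply (recipient_deviation_pool _ (p + S)); try lra; by_thresholds.
  - apply (recipient_deviation_pool _ (pg + S)); try lra; by_thresholds.
Qed.

Lemma nonrecipient_deviation_pool (w : R -> R) (r p : R) :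
  pg + S < r <= 1 -> r - S <= p ->
  (forall t, 0 < t < x -> w t = 1 - A) -> (forall t, x < t < th -> w t = 1 - B) ->
  (forall t, th < t < pg + S -> w t = 0) -> (forall t, pg + S < t < r -> w t = 1) ->
  (forall t, r < t < 1 -> w t = 0) ->
  0 < mass f w -> value f w < p * mass f w.
Proof.
  intros Hr Hrp H1 H2 H3 H4 H5 Hpos.
  destruct (pool_of_steps f w [(1 - A, x); (1 - B, th); (0, pg + S); (1, r); (0, 1)] f_int)
    as [_ [Hm Hv]]; [simpl; repeat split; auto; lra | reflexivity |].
  cbn [step_sum] in Hm, Hv. rewrite cdf_0 in Hm. rewrite moment_0 in Hv.
  assert (Hnon := nonrecip_unprofitable r Hr).
  assert (Hmass : mass f w = (1 - mu) * cdf f th + cdf f r - cdf f (pg + S)) by lra.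
  assert (Hvalue : value f w = (1 - mu) * cdf f th * thm + (moment f r - moment f (pg + S)))
    by lra.
  rewrite Hvalue. rewrite Hmass in *.
  assert ((r - S) * ((1 - mu) * cdf f th + cdf f r - cdf f (pg + S)) <=
          p * ((1 - mu) * cdf f th + cdf f r - cdf f (pg + S)))
    by (apply Rmult_le_compat_r; lra).
  lra.
Qed.

(* An offer [p] <= pg to non-recipients only attracts the market sellers of
   [0, th], whose mean is thm < p; a higher offer also attracts high types. *)
Lemma no_deviation_nonrecipients :
  no_profitable_deviation f (fun p' t => (1 - gov sls_profile t) * le_ind t (u I S p'))
    (price2n sls_profile).
Proof.
  intros p Hp Hpos. simpl in Hp.
  destruct (Rle_dec p pg) as [Hlow | Hhigh]; [|destruct (Rle_dec (p + S) 1) as [Hin | Hout]].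
  - destruct (market_pool (fun t => (1 - gov sls_profile t) * le_ind t (u I S p)))
      as [_ [Hm Hv]]; try by_thresholds.
    rewrite Hv, Hm in *.
    assert (thm * ((1 - mu) * cdf f th) < p * ((1 - mu) * cdf f th))
      by (apply Rmult_lt_compat_r; lra).
    lra.
  - apply (nonrecipient_deviation_pool _ (p + S)); try lra; by_thresholds.
  - apply (nonrecipient_deviation_pool _ 1); try lra; by_thresholds.
Qed.

(* The profile is an equilibrium: the pools of the three markets are the
   recipient and market-seller pools, which break even by construction. *)
Lemma sls_is_equilibrium : is_equilibrium f I S pg sls_profile.
Proof.
  destruct (recipient_pool (w2r sls_profile)) as [Irecip [Mrecip Vrecip]]; try by_thresholds.
  destruct (market_pool (mkt sls_profile)) as [Imkt [Mmkt Vmkt]]; try by_thresholds.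
  destruct (market_pool (w2n sls_profile)) as [Inonrecip [Mnonrecip Vnonrecip]];
    try by_thresholds.
  split; [intros t Ht; repeat split; by_thresholds|].
  split; [exact gov_pool_integrable|].
  split; [exact Imkt|]. split; [exact Irecip|]. split; [exact Inonrecip|].
  split; [intros t Ht; repeat split; by_thresholds|].
  split; [intros t Ht; repeat split; by_thresholds|].
  split; [intros _; rewrite Mmkt, Vmkt; simpl; ring|].
  split; [intros _; rewrite Mrecip, Vrecip; simpl; ring|].
  split; [intros _; rewrite Mnonrecip, Vnonrecip; simpl; ring|].
  split; [exact no_deviation_first_period|].
  split; [exact no_deviation_recipients | exact no_deviation_nonrecipients].
Qed.

Lemma sls_has_structure : sls_structure f S pg mu thg thm th sls_profile.
Proof.
  destruct (pool_integrals_step f gov_w 0 [(A, x); (B, th)] f_int (Rle_refl 0))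
    as [_ [Mgov [_ Vgov]]]; [simpl; repeat split; try lra; by_thresholds | simpl; lra |].
  destruct (pool_integrals_step f mkt_w 0 [(1 - A, x); (1 - B, th)] f_int (Rle_refl 0))
    as [_ [_ [_ Vmkt]]]; [simpl; repeat split; try lra; by_thresholds | simpl; lra |].
  cbn [step_end step_sum] in *. rewrite cdf_0 in Mgov. rewrite moment_0 in Vgov, Vmkt.
  unfold sls_structure. cbv zeta. rewrite Rmin_left by lra.
  cbn [gov mkt sell_r sell_m sell_o price1 price2r price2n sls_profile].
  split; [reflexivity|]. split; [reflexivity|]. split; [reflexivity|].
  split; [intros t Ht; repeat split; by_thresholds|].
  split; [rewrite Mgov; lra|].
  split; [rewrite Vgov; lra|].
  split; [rewrite Vmkt; lra|].
  split; intros t Ht; repeat split; by_thresholds.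
Qed.

End ShortLivedStimulation.

Theorem propositionB1 (f : R -> R) (S I theta0 pg mu thg thm th : R) :
  density_assumptions f ->
  0 < S -> 0 < I ->
  (* laissez-faire benchmark theta0, p0 = E[theta | theta <= theta0] >= I *)
  0 < theta0 < 1 -> theta0 - S = cmean_le f theta0 ->
  (forall x, 0 < x < 1 -> x - S = cmean_le f x -> x = theta0) ->
  I <= cmean_le f theta0 ->
  cmean_le f theta0 < pg -> pg < 1 - S ->
  0 < mu < 1 ->
  0 < th -> th < Rmin (pg + S) 1 ->
  thg < thm -> thm < pg ->
  (* (a) *) pg + thg = 2 * thm ->
  (* (b) *) 2 * thm + 2 * S = th + pg + S ->
  (* (c) *) thg >= I ->
  (* (d) *) mu * thg + (1 - mu) * thm = cmean_le f th ->
  (* (e) *) (forall x, 0 <= x <= 1 -> cdf f x = mu * cdf f th -> thg >= cmean_le f x) ->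
  (* (f) *) (forall p', thg < p' <= pg ->
      (mu * cdf f th * thg + RInt (fun t => t * f t) th (p' + S)) /
      (mu * cdf f th + cdf f (p' + S) - cdf f th) - p' < 0) ->
  (* (g) *) (forall p', pg < p' <= 1 - S ->
      ((1 - mu) * cdf f th * thm + RInt (fun t => t * f t) (Rmin (pg + S) 1) (p' + S)) /
      ((1 - mu) * cdf f th + cdf f (p' + S) - cdf f (Rmin (pg + S) 1)) - p' < 0) ->
  exists P : profile,
    is_equilibrium f I S pg P /\ sls_structure f S pg mu thg thm th P.
Proof.
  intros [Hpos [Hf _]] _ HI _ _ _ _ _ Hpg1 Hmu Hth0 Hth1 Hgm Hmp Ha Hb Hc Hd He
         Hdev_recip Hdev_nonrecip.
  assert (Hnonneg : forall t, 0 <= t <= 1 -> 0 <= f t) by (intros; apply Rlt_le, Hpos; lra).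
  assert (HthG : Rmin (pg + S) 1 = pg + S) by (apply Rmin_left; lra).
  rewrite HthG in Hth1, Hdev_nonrecip.
  assert (Hth : th = thg + S) by lra.
  (* by (d) the bottom pool [0, th] has positive mean, hence positive mass *)
  assert (HFth : 0 < cdf f th) by (apply cdf_pos_of_cmean; auto; [lra | rewrite <- Hd; nra]).
  assert (Hbottom : moment f th = mu * cdf f th * thg + (1 - mu) * cdf f th * thm)
    by (rewrite moment_of_cmean, <- Hd by exact HFth; ring).
  (* the cutoff x below which lies the mass mu F(th) *)
  destruct (cdf_ivt f th (mu * cdf f th) Hf ltac:(lra) ltac:(nra)) as [x [Hx HFx]].
  assert (HFx_pos : 0 < cdf f x) by (rewrite HFx; nra).
  assert (Hx0 : x <> 0) by (intros ->; rewrite cdf_0 in HFx_pos; lra).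
  assert (Hxth : x <> th) by (intros ->; nra).
  destruct (pool_split mu (cdf f x) (cdf f th) (moment f x) (moment f th) thg Hmu HFx_pos HFx)
    as [A [B [HA [HB [Hmass Hvalue]]]]].
  { apply Rge_le, He; [lra|exact HFx]. }
  { rewrite Hbottom. apply (Rmult_lt_reg_r (cdf f th)); [exact HFth|].
    unfold Rdiv. rewrite Rmult_assoc, Rinv_l by lra.
    assert (0 < (1 - mu) * cdf f th * (thm - thg))
      by (apply Rmult_lt_0_compat; [apply Rmult_lt_0_compat|]; lra).
    lra. }
  assert (Hrecip := loss_condition_cleared f (mu * cdf f th) (mu * cdf f th * thg) S th (pg + S)
                      Hnonneg Hf ltac:(lra) ltac:(lra) ltac:(nra)
                      ltac:(intros p Hp; apply Hdev_recip; lra)).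
  assert (Hnonrecip := loss_condition_cleared f ((1 - mu) * cdf f th)
                         ((1 - mu) * cdf f th * thm) S (pg + S) 1
                         Hnonneg Hf ltac:(lra) ltac:(lra) ltac:(nra)
                         ltac:(intros p Hp; apply Hdev_nonrecip; lra)).
  exists (sls_profile S pg thg thm th x A B). split.
  - apply (sls_is_equilibrium f S I pg mu thg thm th x A B); auto; lra.
  - apply (sls_has_structure f S pg mu thg thm th x A B); auto; lra.
Qed.
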